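(* Consider the continuous-variable Deutsch–Jozsa algorithm defined below, with measurement window $\delta=\pi/(2P)$. For every $n$, every $P>0$ and every function $f:\{0,1\}^n\to\{0,1\}$ promised to be constant or balanced, an error probability of $O(e^{-m})$ in deciding whether $f$ is constant or balanced can be achieved by making $O(m)$ independent repetitions of the algorithm (each repetition with a fresh preparation of the initial state and the same oracle $f$), with the hidden constants independent of $N=2^n$ and of $f$.
   Context: Deutsch–Jozsa problem: given $f:\{0,1\}^n\to\{0,1\}$ promised to be either constant (same value on all inputs) or balanced (value $0$ on exactly half of the inputs), decide which. Let $N=2^n$ and let $z=z_1z_2\cdots z_N\in\{0,1\}^N$ be the list of values of $f$ on the inputs in lexicographic order. Continuous-variable (CV) Deutsch–Jozsa algorithm with parameter $P>0$: prepare the position wave function $\phi_0(x)=\frac{\sin(Px)}{\sqrt{\pi P}\,x}$; apply the Fourier transform $\tilde\phi(p)=\frac{1}{\sqrt{2\pi}}\int_{-\infty}^{\infty}e^{\imath p x}\phi(x)\,dx$, giving the momentum wave function equal to $1/\sqrt{2P}$ on $[-P,P]$ and $0$ elsewhere; the oracle multiplies this by $f_z(p)=\sum_{j=1}^{N}(-1)^{z_j}\,\mathbf{1}_{I_j}(p)$, where $[-P,P]$ is partitioned into $N$ consecutive equal intervals $I_1,\dots,I_N$ of width $2P/N$ ordered from $p=+P$ down to $p=-P$ (so $I_j$ is centred at $\frac{N-(2j-1)}{N}P$); then apply the inverse Fourier transform, yielding $$\phi_z(x)=\frac{\sin(Px/N)}{\sqrt{P\pi}\,x}\sum_{j=1}^{N}(-1)^{z_j}\exp\!\Big(\imath\,\tfrac{N-(2j-1)}{N}Px\Big).$$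 Finally measure position and output $1$ (''detection'') if the outcome lies in $[-\delta,\delta]$ and $0$ otherwise; thus one run outputs $1$ with probability $\int_{-\delta}^{\delta}|\phi_z(x)|^2\,dx$. Error probability means the probability that the final decision (made from the outcomes of the repetitions) is wrong. *)

From Stdlib Require Import Reals Lra Lia List.
From Coquelicot Require Import Coquelicot.
Import ListNotations.
Open Scope R_scope.

Fixpoint rsum (f : nat -> R) (n : nat) : R :=
  match n with
  | O => 0
  | S k => rsum f k + f k
  end.

Fixpoint ncount (b : nat -> bool) (n : nat) : nat :=
  match n with
  | O => O
  | S k => (ncount b k + (if b k then 1 else 0))%nat
  end.

(* The truth table z_1 ... z_N is encoded by z : nat -> bool with
   z j = z_{j+1} for 0 <= j < N (true = value 1). *)
Definition sgn (b : bool) : R := if b then -1 else 1.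

(* Frequency of interval I_{j+1}: (N - (2(j+1)-1))/N * P. *)
Definition freq (N : nat) (P : R) (j : nat) : R :=
  (INR N - (2 * INR j + 1)) / INR N * P.

(* |phi_z(x)|^2, with |sum_j s_j exp(i theta_j x)|^2 written as Re^2 + Im^2. *)
Definition phi_sq (N : nat) (P : R) (z : nat -> bool) (x : R) : R :=
  (sin (P * x / INR N)) ^ 2 / (P * PI * x ^ 2) *
  ((rsum (fun j => sgn (z j) * cos (freq N P j * x)) N) ^ 2 +
   (rsum (fun j => sgn (z j) * sin (freq N P j * x)) N) ^ 2).

Definition delta (P : R) : R := PI / (2 * P).

Definition detect_prob (n : nat) (P : R) (z : nat -> bool) : R :=
  RInt (phi_sq (2 ^ n) P z) (- delta P) (delta P).

Definition is_constant (n : nat) (z : nat -> bool) : Prop :=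
  forall j, (j < 2 ^ n)%nat -> z j = z O.

Definition is_balanced (n : nat) (z : nat -> bool) : Prop :=
  (2 * ncount (fun j => negb (z j)) (2 ^ n) = 2 ^ n)%nat.

Fixpoint all_outcomes (k : nat) : list (list bool) :=
  match k with
  | O => cons nil nil
  | S k' => flat_map (fun l => cons (cons true l) (cons (cons false l) nil)) (all_outcomes k')
  end.

Definition seq_prob (p : R) (w : list bool) : R :=
  List.fold_right (fun (b : bool) (acc : R) => (if b then p else 1 - p) * acc) 1 w.

(* Error probability of decision rule D (D w = true means "constant")
   after k independent runs, when the truth is [truth]. *)
Definition error_prob (p : R) (k : nat) (D : list bool -> bool) (truth : bool) : R :=
  List.fold_right (fun (w : list bool) (acc : R) =>
     seq_prob p w * (if Bool.eqb (D w) truth then 0 else 1) + acc) 0 (all_outcomes k).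

From Stdlib Require Import Reals Lra Lia List.
From Coquelicot Require Import Coquelicot.
Open Scope R_scope.

(* Inside the window |P x| <= pi/2 the density |phi_z(x)|^2 is compared with quadratics in x.
   If f is constant the N phases add up coherently and |phi_z(x)|^2 >= (P/pi)(1 - 5(Px)^2/12),
   so one run detects with probability at least 1 - 5 pi^2/144 > 16/25; if f is balanced the
   signs cancel to second order and |phi_z(x)|^2 <= P^3 x^2 / (2 pi), so it detects with
   probability at most pi^2/24 < 43/100.  Neither bound depends on N.  Answering "constant"
   when at least 28 m of 52 m runs detect, a Chernoff bound on the number of detections makes
   both error probabilities at most 3^(-m). *)

Lemma rsum_ext f g k : (forall j, (j < k)%nat -> f j = g j) -> rsum f k = rsum g k.
Proof.
  induction k as [|k IH]; intros H; simpl; [reflexivity|].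
  rewrite IH by (intros; apply H; lia). rewrite H by lia. reflexivity.
Qed.

Lemma rsum_le f g k : (forall j, (j < k)%nat -> f j <= g j) -> rsum f k <= rsum g k.
Proof.
  induction k as [|k IH]; intros H; simpl; [lra|].
  pose proof (IH ltac:(intros; apply H; lia)). pose proof (H k ltac:(lia)). lra.
Qed.

Lemma rsum_plus f g k : rsum (fun j => f j + g j) k = rsum f k + rsum g k.
Proof. induction k as [|k IH]; simpl; [ring|]. rewrite IH; ring. Qed.

Lemma rsum_mult_l c f k : rsum (fun j => c * f j) k = c * rsum f k.
Proof. induction k as [|k IH]; simpl; [ring|]. rewrite IH; ring. Qed.

Lemma rsum_const c k : rsum (fun _ => c) k = INR k * c.
Proof. induction k as [|k IH]; cbn [rsum]; [simpl; ring|]. rewrite IH, S_INR; ring. Qed.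

Lemma Rabs_rsum_le f k : Rabs (rsum f k) <= rsum (fun j => Rabs (f j)) k.
Proof.
  induction k as [|k IH]; simpl; [rewrite Rabs_R0; lra|].
  pose proof (Rabs_triang (rsum f k) (f k)). lra.
Qed.

Lemma rsum_sq_le f k : rsum f k ^ 2 <= INR k * rsum (fun j => f j ^ 2) k.
Proof.
  induction k as [|k IH]; cbn [rsum]; [simpl; lra|].
  destruct (Nat.eq_dec k 0) as [->|Hk]; [simpl; lra|].
  rewrite S_INR. set (A := rsum f k) in *. set (Q := rsum (fun j => f j ^ 2) k) in *.
  set (a := f k). assert (HK : 0 < INR k) by (apply lt_0_INR; lia). set (K := INR k) in *.
  enough (2 * A * a <= Q + K * a ^ 2) by nra.
  pose proof (pow2_ge_0 (A - K * a)).
  apply Rmult_le_reg_l with K; nra.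
Qed.

Lemma rsum_freq_sq_le N P : rsum (fun j => freq N P j ^ 2) N <= P ^ 2 * INR N / 3.
Proof.
  destruct N as [|N']; [simpl; lra|]. set (N := S N').
  assert (HN : 1 <= INR N) by (apply (le_INR 1); unfold N; lia).
  assert (Hsq_sum : forall k, rsum (fun j => (INR N - (2 * INR j + 1)) ^ 2) k
      = INR k * INR N ^ 2 - 2 * INR N * INR k ^ 2 + INR k * (4 * INR k ^ 2 - 1) / 3).
  { induction k as [|k IH]; cbn [rsum]; [simpl; field|]. rewrite IH, S_INR. field. }
  rewrite (rsum_ext _ (fun j => (P / INR N) ^ 2 * (INR N - (2 * INR j + 1)) ^ 2))
    by (intros; unfold freq; field; lra).
  rewrite rsum_mult_l, Hsq_sum.
  replace ((P / INR N) ^ 2 * (INR N * INR N ^ 2 - 2 * INR N * INR N ^ 2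
           + INR N * (4 * INR N ^ 2 - 1) / 3))
    with (P ^ 2 * INR N / 3 - P ^ 2 / (3 * INR N)) by (field; lra).
  assert (0 <= P ^ 2 / (3 * INR N)) by (apply Rdiv_le_0_compat; nra).
  lra.
Qed.

Lemma Rabs_sin_le y : Rabs (sin y) <= Rabs y.
Proof.
  assert (Hpos : forall t, 0 <= t -> Rabs (sin t) <= t).
  { intros t Ht. destruct (Rle_lt_dec 1 t).
    - pose proof (SIN_bound t). apply Rabs_le; lra.
    - destruct (Req_dec t 0) as [->|Ht0]; [rewrite sin_0, Rabs_R0; lra|].
      pose proof (sin_lt_x t). pose proof PI2_3_2.
      pose proof (sin_ge_0 t Ht ltac:(lra)). rewrite Rabs_pos_eq; lra. }
  destruct (Rle_lt_dec 0 y).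
  - rewrite (Rabs_pos_eq y) by lra. auto.
  - rewrite <- (Ropp_involutive y), sin_neg, !Rabs_Ropp, (Rabs_left y) by lra.
    apply Hpos; lra.
Qed.

Lemma sin_sq_le y : sin y ^ 2 <= y ^ 2.
Proof.
  rewrite <- (pow2_abs (sin y)), <- (pow2_abs y).
  apply pow_incr. split; [apply Rabs_pos|apply Rabs_sin_le].
Qed.

Lemma one_minus_cos_le y : 1 - cos y <= y ^ 2 / 2.
Proof.
  replace y with (2 * (y / 2)) at 1 by field. rewrite cos_2a_sin.
  pose proof (sin_sq_le (y / 2)). simpl in *. lra.
Qed.

Lemma PI_le_16_5 : PI <= 16 / 5.
Proof.
  destruct (Rle_lt_dec PI (16 / 5)) as [|Hgt]; [assumption|exfalso].
  pose proof (cos_gt_0 (8 / 5) ltac:(lra) ltac:(lra)).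
  pose proof (cos_bound (8 / 5) 0 ltac:(lra) ltac:(lra)) as [_ Hub].
  unfold cos_approx, cos_term in Hub. simpl in Hub. lra.
Qed.

Definition sinc (y : R) : R := if Req_EM_T y 0 then 1 else sin y / y.

Lemma sinc_continuous : continuity sinc.
Proof.
  intros y. destruct (Req_EM_T y 0) as [->|Hy].
  - intros eps Heps. destruct (derivable_pt_lim_sin 0 eps Heps) as [d Hd].
    exists d. split; [apply cond_pos|]. intros x [[_ Hx0] Hx]. simpl in *. unfold Rdist in *.
    unfold sinc. destruct (Req_EM_T x 0) as [->|Hx0']; [congruence|].
    destruct (Req_EM_T 0 0); [|congruence].
    rewrite Rminus_0_r in Hx. specialize (Hd x Hx0' Hx).
    rewrite Rplus_0_l, sin_0, cos_0, Rminus_0_r in Hd. exact Hd.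
  - apply continuity_pt_locally_ext with (f := fun x => sin x / x) (a := Rabs y).
    + apply Rabs_pos_lt; auto.
    + intros x Hx. unfold sinc. destruct (Req_EM_T x 0) as [->|]; [|reflexivity].
      unfold Rdist in Hx. rewrite Rminus_0_l, Rabs_Ropp in Hx. lra.
    + apply continuity_pt_div; auto. apply continuity_sin. apply continuity_pt_id.
Qed.

Lemma sinc_sq_le_1 y : sinc y ^ 2 <= 1.
Proof.
  unfold sinc. destruct (Req_EM_T y 0) as [|Hy]; [simpl; lra|].
  pose proof (sin_sq_le y). assert (0 < y ^ 2) by (apply pow2_gt_0; auto).
  replace ((sin y / y) ^ 2) with (sin y ^ 2 / y ^ 2) by (field; auto).
  apply Rmult_le_reg_r with (y ^ 2); [lra|].
  unfold Rdiv. rewrite Rmult_assoc, Rinv_l; lra.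
Qed.

Lemma sinc_ge y : Rabs y <= PI -> 1 - y ^ 2 / 6 <= sinc y.
Proof.
  intros Hy. unfold sinc. destruct (Req_EM_T y 0) as [|Hy0]; [subst; lra|].
  (* sinc is even, so we may work with t = |y| > 0 *)
  assert (E : sin y / y = sin (Rabs y) / Rabs y).
  { destruct (Rle_lt_dec 0 y); [rewrite Rabs_pos_eq by lra; reflexivity|].
    rewrite Rabs_left, sin_neg by lra. field. lra. }
  rewrite E, <- (pow2_abs y). set (t := Rabs y) in *.
  assert (Ht : 0 < t) by (apply Rabs_pos_lt; auto).
  pose proof (sin_bound t 0 ltac:(lra) Hy) as [Hlb _].
  unfold sin_approx, sin_term in Hlb. simpl in Hlb.
  apply Rmult_le_reg_r with t; [lra|]. unfold Rdiv. rewrite Rmult_assoc, Rinv_l by lra. nra.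
Qed.

Definition cos_sum N P z x := rsum (fun j => sgn (z j) * cos (freq N P j * x)) N.
Definition sin_sum N P z x := rsum (fun j => sgn (z j) * sin (freq N P j * x)) N.

Lemma sgn_sq b : sgn b ^ 2 = 1.
Proof. destruct b; simpl; ring. Qed.

Lemma Rabs_sgn b : Rabs (sgn b) = 1.
Proof. destruct b; unfold sgn, Rabs; destruct Rcase_abs; lra. Qed.

Lemma rsum_sgn_balanced n z : is_balanced n z -> rsum (fun j => sgn (z j)) (2 ^ n) = 0.
Proof.
  intros Hz. apply (f_equal INR) in Hz. rewrite mult_INR in Hz. simpl (INR 2) in Hz.
  assert (E : forall k, rsum (fun j => sgn (z j)) k
               = 2 * INR (ncount (fun j => negb (z j)) k) - INR k).
  { induction k as [|k IH]; cbn [rsum ncount]; [simpl; ring|].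
    rewrite IH, plus_INR, S_INR. destruct (z k); simpl; ring. }
  rewrite E. lra.
Qed.

Lemma cos_sum_sq_add_sin_sum_sq_le N P z x :
  cos_sum N P z x ^ 2 + sin_sum N P z x ^ 2 <= INR N ^ 2.
Proof.
  pose proof (rsum_sq_le (fun j => sgn (z j) * cos (freq N P j * x)) N) as HC.
  pose proof (rsum_sq_le (fun j => sgn (z j) * sin (freq N P j * x)) N) as HS.
  assert (E : rsum (fun j => (sgn (z j) * cos (freq N P j * x)) ^ 2) N
            + rsum (fun j => (sgn (z j) * sin (freq N P j * x)) ^ 2) N = INR N).
  { rewrite <- rsum_plus, <- (Rmult_1_r (INR N)), <- rsum_const. apply rsum_ext.
    intros j _. rewrite !Rpow_mult_distr, sgn_sq.
    pose proof (sin2_cos2 (freq N P j * x)). unfold Rsqr in *. simpl. lra. }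
  unfold cos_sum, sin_sum.
  replace (INR N ^ 2) with (INR N * INR N) by ring. rewrite <- E at 2. lra.
Qed.

Lemma sin_sum_sq_le N P z x : sin_sum N P z x ^ 2 <= INR N ^ 2 * (P * x) ^ 2 / 3.
Proof.
  eapply Rle_trans; [apply rsum_sq_le|].
  assert (H : rsum (fun j => (sgn (z j) * sin (freq N P j * x)) ^ 2) N
              <= x ^ 2 * (P ^ 2 * INR N / 3)).
  { eapply Rle_trans; [|apply Rmult_le_compat_l; [apply pow2_ge_0|apply rsum_freq_sq_le]].
    rewrite <- rsum_mult_l. apply rsum_le. intros j _.
    rewrite Rpow_mult_distr, sgn_sq, Rmult_1_l, <- Rpow_mult_distr, Rmult_comm.
    apply sin_sq_le. }
  pose proof (pos_INR N).
  replace (INR N ^ 2 * (P * x) ^ 2 / 3) with (INR N * (x ^ 2 * (P ^ 2 * INR N / 3))) by field.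
  apply Rmult_le_compat_l; assumption.
Qed.

Lemma rsum_cos_freq_ge N P x :
  INR N * (1 - (P * x) ^ 2 / 6) <= rsum (fun j => cos (freq N P j * x)) N.
Proof.
  apply Rle_trans with (rsum (fun j => 1 + (- (x ^ 2 / 2)) * freq N P j ^ 2) N).
  - rewrite rsum_plus, rsum_const, rsum_mult_l.
    pose proof (rsum_freq_sq_le N P). pose proof (pow2_ge_0 x).
    assert (x ^ 2 / 2 * rsum (fun j => freq N P j ^ 2) N <= x ^ 2 / 2 * (P ^ 2 * INR N / 3))
      by (apply Rmult_le_compat_l; lra).
    lra.
  - apply rsum_le. intros j _. pose proof (one_minus_cos_le (freq N P j * x)).
    rewrite Rpow_mult_distr in *. lra.
Qed.

Lemma cos_sum_constant_ge N P z x : (forall j, (j < N)%nat -> z j = z O) ->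
  INR N * (1 - (P * x) ^ 2 / 6) <= Rabs (cos_sum N P z x).
Proof.
  intros Hz. unfold cos_sum.
  rewrite (rsum_ext _ (fun j => sgn (z O) * cos (freq N P j * x))) by (intros j Hj; rewrite Hz; auto).
  rewrite rsum_mult_l, Rabs_mult, Rabs_sgn, Rmult_1_l.
  eapply Rle_trans; [apply rsum_cos_freq_ge|apply Rle_abs].
Qed.

Lemma cos_sum_balanced_le N P z x : rsum (fun j => sgn (z j)) N = 0 ->
  Rabs (cos_sum N P z x) <= INR N * (P * x) ^ 2 / 6.
Proof.
  intros Hz.
  (* the signs cancel, so only the deviation of each cosine from 1 contributes *)
  assert (E : cos_sum N P z x = rsum (fun j => sgn (z j) * (cos (freq N P j * x) - 1)) N).
  { unfold cos_sum.
    rewrite (rsum_ext (fun j => sgn (z j) * (cos (freq N P j * x) - 1))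
               (fun j => sgn (z j) * cos (freq N P j * x) + (-1) * sgn (z j))) by (intros; ring).
    rewrite rsum_plus, rsum_mult_l, Hz. ring. }
  rewrite E. eapply Rle_trans; [apply Rabs_rsum_le|].
  apply Rle_trans with (x ^ 2 / 2 * rsum (fun j => freq N P j ^ 2) N).
  - rewrite <- rsum_mult_l. apply rsum_le. intros j _.
    rewrite Rabs_mult, Rabs_sgn, Rmult_1_l.
    pose proof (one_minus_cos_le (freq N P j * x)). pose proof (COS_bound (freq N P j * x)).
    rewrite Rabs_left1 by lra. rewrite Rpow_mult_distr in *. lra.
  - pose proof (rsum_freq_sq_le N P). pose proof (pow2_ge_0 x).
    replace (INR N * (P * x) ^ 2 / 6) with (x ^ 2 / 2 * (P ^ 2 * INR N / 3)) by field.
    apply Rmult_le_compat_l; lra.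
Qed.

(* [phi_sq] with the factor [sin (P x / N) / x] replaced by its continuous extension at [x = 0]
   (at [x = 0] itself, [phi_sq] takes the junk value [0] because [/ 0 = 0]). *)
Definition phi_sq_sinc N P z x :=
  P / PI * sinc (P * x / INR N) ^ 2 *
  ((cos_sum N P z x / INR N) ^ 2 + (sin_sum N P z x / INR N) ^ 2).

Lemma phi_sq_eq_sinc N P z x : (1 <= N)%nat -> P <> 0 -> x <> 0 ->
  phi_sq N P z x = phi_sq_sinc N P z x.
Proof.
  intros HN HP Hx. assert (HNR : 1 <= INR N) by (apply (le_INR 1); lia).
  pose proof PI_RGT_0.
  unfold phi_sq, phi_sq_sinc, cos_sum, sin_sum, sinc.
  destruct (Req_EM_T (P * x / INR N) 0) as [E|_].
  - exfalso. unfold Rdiv in E. apply Rmult_integral in E as [E|E].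
    + apply Rmult_integral in E; tauto.
    + apply Rinv_neq_0_compat in E; lra.
  - field. repeat split; lra.
Qed.

Lemma continuity_rsum (F : nat -> R -> R) k :
  (forall j, continuity (F j)) -> continuity (fun x => rsum (fun j => F j x) k).
Proof.
  intros HF. induction k as [|k IH]; simpl.
  - apply continuity_const. intros ? ?; reflexivity.
  - apply continuity_plus; auto.
Qed.

Lemma phi_sq_sinc_continuous N P z : continuity (phi_sq_sinc N P z).
Proof.
  assert (Hmult : forall f g, continuity f -> continuity g -> continuity (fun x => f x * g x))
    by exact continuity_mult.
  assert (Hplus : forall f g, continuity f -> continuity g -> continuity (fun x => f x + g x))
    by exact continuity_plus.
  assert (Hconst : forall c, continuity (fun _ : R => c))
    by (intros c; apply continuity_const; intros ? ?; reflexivity).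
  assert (Hid : continuity (fun x => x)) by exact (derivable_continuous _ derivable_id).
  assert (Hsq : forall f, continuity f -> continuity (fun x => f x ^ 2))
    by (intros f Hf; simpl; repeat apply Hmult; auto).
  assert (Hsinc : continuity (fun x => sinc (P * x / INR N))).
  { apply (continuity_comp (fun x => P * x / INR N) sinc); [|apply sinc_continuous].
    unfold Rdiv. repeat apply Hmult; auto. }
  assert (Htrig : forall g, continuity g ->
            continuity (fun x => rsum (fun j => sgn (z j) * g (freq N P j * x)) N)).
  { intros g Hg. apply continuity_rsum. intros j. apply Hmult; [apply Hconst|].
    apply (continuity_comp (fun x => freq N P j * x) g); auto. }
  unfold phi_sq_sinc, cos_sum, sin_sum.
  repeat (apply Hmult || apply Hplus || apply Hsq); unfold Rdiv;
    repeat apply Hmult; auto using continuity_cos, continuity_sin.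
Qed.

Lemma phi_sq_sinc_nonneg N P z x : 0 <= P -> 0 <= phi_sq_sinc N P z x.
Proof.
  intros HP. pose proof PI_RGT_0. unfold phi_sq_sinc.
  apply Rmult_le_pos; [apply Rmult_le_pos; [apply Rdiv_le_0_compat; lra|apply pow2_ge_0]|].
  pose proof (pow2_ge_0 (cos_sum N P z x / INR N)).
  pose proof (pow2_ge_0 (sin_sum N P z x / INR N)). lra.
Qed.

Lemma phi_sq_sinc_le_sums N P z x : 0 <= P ->
  phi_sq_sinc N P z x <= P / PI * ((cos_sum N P z x / INR N) ^ 2 + (sin_sum N P z x / INR N) ^ 2).
Proof.
  intros HP. pose proof PI_RGT_0. unfold phi_sq_sinc.
  pose proof (sinc_sq_le_1 (P * x / INR N)).
  pose proof (pow2_ge_0 (cos_sum N P z x / INR N)).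
  pose proof (pow2_ge_0 (sin_sum N P z x / INR N)).
  rewrite Rmult_assoc. apply Rmult_le_compat_l; [apply Rdiv_le_0_compat; lra|]. nra.
Qed.

Lemma phi_sq_sinc_le N P z x : (1 <= N)%nat -> 0 <= P -> phi_sq_sinc N P z x <= P / PI.
Proof.
  intros HN HP. assert (HNR : 1 <= INR N) by (apply (le_INR 1); lia). pose proof PI_RGT_0.
  eapply Rle_trans; [apply phi_sq_sinc_le_sums; auto|].
  rewrite <- (Rmult_1_r (P / PI)) at 2.
  apply Rmult_le_compat_l; [apply Rdiv_le_0_compat; lra|].
  pose proof (cos_sum_sq_add_sin_sum_sq_le N P z x).
  replace ((cos_sum N P z x / INR N) ^ 2 + (sin_sum N P z x / INR N) ^ 2)
    with ((cos_sum N P z x ^ 2 + sin_sum N P z x ^ 2) / INR N ^ 2) by (field; lra).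
  apply Rmult_le_reg_r with (INR N ^ 2); [nra|].
  unfold Rdiv. rewrite Rmult_assoc, Rinv_l; nra.
Qed.

Lemma phi_sq_sinc_constant_ge N P z x : (2 <= N)%nat -> 0 <= P ->
  (forall j, (j < N)%nat -> z j = z O) -> Rabs (P * x) <= PI / 2 ->
  P / PI * (1 - 5 / 12 * (P * x) ^ 2) <= phi_sq_sinc N P z x.
Proof.
  intros HN HP Hz Hx. assert (HNR : 2 <= INR N) by (apply (le_INR 2); lia).
  pose proof PI_RGT_0. pose proof PI_le_16_5.
  unfold phi_sq_sinc. set (u := P * x) in *.
  assert (Hu : u ^ 2 <= 64 / 25) by (rewrite <- pow2_abs; pose proof (Rabs_pos u); nra).
  assert (Hs : 1 - u ^ 2 / 24 <= sinc (u / INR N)).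
  { assert (E : (u / INR N) ^ 2 = u ^ 2 / INR N ^ 2) by (field; lra).
    assert (u ^ 2 / INR N ^ 2 <= u ^ 2 / 4).
    { apply Rmult_le_compat_l; [apply pow2_ge_0|apply Rinv_le_contravar; nra]. }
    assert (Rabs (u / INR N) <= PI).
    { unfold Rdiv. rewrite Rabs_mult, Rabs_inv, (Rabs_pos_eq (INR N)) by lra.
      apply Rmult_le_reg_r with (INR N); [lra|].
      rewrite Rmult_assoc, Rinv_l by lra. pose proof (Rabs_pos u). nra. }
    pose proof (sinc_ge (u / INR N)). lra. }
  assert (Hc : 1 - u ^ 2 / 6 <= Rabs (cos_sum N P z x / INR N)).
  { pose proof (cos_sum_constant_ge N P z x Hz) as HC. fold u in HC.
    unfold Rdiv. rewrite Rabs_mult, Rabs_inv, (Rabs_pos_eq (INR N)) by lra.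
    apply Rmult_le_reg_r with (INR N); [lra|].
    rewrite Rmult_assoc, Rinv_l by lra. lra. }
  assert (Hs2 : (1 - u ^ 2 / 24) ^ 2 <= sinc (u / INR N) ^ 2) by (apply pow_incr; lra).
  assert (Hc2 : (1 - u ^ 2 / 6) ^ 2 <= (cos_sum N P z x / INR N) ^ 2)
    by (rewrite <- (pow2_abs (cos_sum N P z x / INR N)); apply pow_incr; lra).
  pose proof (pow2_ge_0 (sin_sum N P z x / INR N)).
  assert (Hpoly : 1 - 5 / 12 * u ^ 2 <= (1 - u ^ 2 / 24) ^ 2 * (1 - u ^ 2 / 6) ^ 2).
  { assert (1 - u ^ 2 / 12 <= (1 - u ^ 2 / 24) ^ 2) by nra.
    assert (1 - u ^ 2 / 3 <= (1 - u ^ 2 / 6) ^ 2) by nra.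
    pose proof (pow2_ge_0 u). nra. }
  rewrite Rmult_assoc. apply Rmult_le_compat_l; [apply Rdiv_le_0_compat; lra|].
  pose proof (pow2_ge_0 (1 - u ^ 2 / 24)). pose proof (pow2_ge_0 (1 - u ^ 2 / 6)). nra.
Qed.

Lemma phi_sq_sinc_balanced_le N P z x : (1 <= N)%nat -> 0 <= P ->
  rsum (fun j => sgn (z j)) N = 0 -> Rabs (P * x) <= PI / 2 ->
  phi_sq_sinc N P z x <= P ^ 3 / (2 * PI) * x ^ 2.
Proof.
  intros HN HP Hz Hx. assert (HNR : 1 <= INR N) by (apply (le_INR 1); lia).
  pose proof PI_RGT_0. pose proof PI_le_16_5.
  set (u := P * x) in *.
  assert (Hu : u ^ 2 <= 64 / 25) by (rewrite <- pow2_abs; pose proof (Rabs_pos u); nra).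
  assert (Hc : (cos_sum N P z x / INR N) ^ 2 <= (u ^ 2 / 6) ^ 2).
  { rewrite <- (pow2_abs (cos_sum N P z x / INR N)). apply pow_incr. split; [apply Rabs_pos|].
    pose proof (cos_sum_balanced_le N P z x Hz) as HC. fold u in HC.
    unfold Rdiv. rewrite Rabs_mult, Rabs_inv, (Rabs_pos_eq (INR N)) by lra.
    apply Rmult_le_reg_r with (INR N); [lra|].
    rewrite Rmult_assoc, Rinv_l by lra. lra. }
  assert (HS : (sin_sum N P z x / INR N) ^ 2 <= u ^ 2 / 3).
  { pose proof (sin_sum_sq_le N P z x) as HS. fold u in HS.
    replace ((sin_sum N P z x / INR N) ^ 2) with (sin_sum N P z x ^ 2 / INR N ^ 2) by (field; lra).
    apply Rmult_le_reg_r with (INR N ^ 2); [nra|].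
    unfold Rdiv. rewrite Rmult_assoc, Rinv_l by nra. lra. }
  assert (Hsum : (cos_sum N P z x / INR N) ^ 2 + (sin_sum N P z x / INR N) ^ 2 <= u ^ 2 / 2).
  { pose proof (pow2_ge_0 u). nra. }
  eapply Rle_trans; [apply phi_sq_sinc_le_sums; auto|].
  replace (P ^ 3 / (2 * PI) * x ^ 2) with (P / PI * (u ^ 2 / 2)) by (unfold u; field; lra).
  apply Rmult_le_compat_l; [apply Rdiv_le_0_compat|]; lra.
Qed.

Lemma ex_RInt_continuity f a b : continuity f -> ex_RInt f a b.
Proof.
  intros Hf. apply (ex_RInt_continuous (V := R_CompleteNormedModule)).
  intros x _. apply continuity_pt_filterlim, Hf.
Qed.

Lemma RInt_ext_except (f g : R -> R) a c b : a < c < b -> ex_RInt g a b ->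
  (forall x, a < x < b -> x <> c -> f x = g x) -> RInt f a b = RInt g a b.
Proof.
  intros Hc Hg Hfg.
  assert (Hl : ex_RInt g a c) by (apply (ex_RInt_Chasles_1 g a c b); [lra|auto]).
  assert (Hr : ex_RInt g c b) by (apply (ex_RInt_Chasles_2 g a c b); [lra|auto]).
  assert (Hfl : is_RInt f a c (RInt g a c)).
  { apply is_RInt_ext with g; [|exact (RInt_correct (V := R_CompleteNormedModule) _ _ _ Hl)].
    intros x Hx. rewrite Rmin_left, Rmax_right in Hx by lra. symmetry. apply Hfg; lra. }
  assert (Hfr : is_RInt f c b (RInt g c b)).
  { apply is_RInt_ext with g; [|exact (RInt_correct (V := R_CompleteNormedModule) _ _ _ Hr)].
    intros x Hx. rewrite Rmin_left, Rmax_right in Hx by lra. symmetry. apply Hfg; lra. }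
  rewrite (is_RInt_unique _ _ _ _ (is_RInt_Chasles f a c b _ _ Hfl Hfr)).
  apply (RInt_Chasles (V := R_CompleteNormedModule)); auto.
Qed.

Lemma is_RInt_quadratic c0 c2 d :
  is_RInt (fun x => c0 + c2 * x ^ 2) (- d) d (2 * c0 * d + 2 * c2 * d ^ 3 / 3).
Proof.
  set (F x := c0 * x + c2 * x ^ 3 / 3).
  replace (2 * c0 * d + 2 * c2 * d ^ 3 / 3) with (minus (F d) (F (- d)))
    by (unfold minus, plus, opp, F; simpl; field).
  apply (is_RInt_derive (V := R_CompleteNormedModule) F).
  - intros x _. unfold F. auto_derive; [auto|field].
  - intros x _. apply continuity_pt_filterlim.
    apply (derivable_continuous_pt (fun x => c0 + c2 * x ^ 2)). reg.
Qed.

Lemma RInt_le_quadratic (g : R -> R) c0 c2 d : 0 <= d -> ex_RInt g (- d) d ->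
  (forall x, - d < x < d -> g x <= c0 + c2 * x ^ 2) ->
  RInt g (- d) d <= 2 * c0 * d + 2 * c2 * d ^ 3 / 3.
Proof.
  intros Hd Hg Hle. rewrite <- (is_RInt_unique _ _ _ _ (is_RInt_quadratic c0 c2 d)).
  apply RInt_le; auto; [lra|]. eexists; apply is_RInt_quadratic.
Qed.

Lemma RInt_ge_quadratic (g : R -> R) c0 c2 d : 0 <= d -> ex_RInt g (- d) d ->
  (forall x, - d < x < d -> c0 + c2 * x ^ 2 <= g x) ->
  2 * c0 * d + 2 * c2 * d ^ 3 / 3 <= RInt g (- d) d.
Proof.
  intros Hd Hg Hle. rewrite <- (is_RInt_unique _ _ _ _ (is_RInt_quadratic c0 c2 d)).
  apply RInt_le; auto; [lra|]. eexists; apply is_RInt_quadratic.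
Qed.

Lemma delta_pos P : 0 < P -> 0 < delta P.
Proof. intros HP. unfold delta. pose proof PI_RGT_0. apply Rdiv_lt_0_compat; lra. Qed.

Lemma Rabs_mult_delta_le P x : 0 < P -> - delta P < x < delta P -> Rabs (P * x) <= PI / 2.
Proof.
  intros HP Hx. unfold delta in Hx. rewrite Rabs_mult, Rabs_pos_eq by lra.
  assert (Rabs x <= PI / (2 * P)) by (apply Rabs_le; lra).
  apply Rmult_le_reg_l with (/ P); [apply Rinv_0_lt_compat; lra|].
  replace (/ P * (P * Rabs x)) with (Rabs x) by (field; lra).
  replace (/ P * (PI / 2)) with (PI / (2 * P)) by (field; lra). lra.
Qed.

Lemma detect_prob_eq_sinc n P z : 0 < P ->
  detect_prob n P z = RInt (phi_sq_sinc (2 ^ n) P z) (- delta P) (delta P).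
Proof.
  intros HP. pose proof (delta_pos P HP). unfold detect_prob.
  apply RInt_ext_except with 0; [lra|apply ex_RInt_continuity, phi_sq_sinc_continuous|].
  intros x _ Hx. apply phi_sq_eq_sinc; [|lra|auto].
  pose proof (Nat.pow_nonzero 2 n). lia.
Qed.

Lemma detect_prob_constant_bounds n P z : (1 <= n)%nat -> 0 < P -> is_constant n z ->
  16 / 25 <= detect_prob n P z <= 1.
Proof.
  intros Hn HP Hz. rewrite detect_prob_eq_sinc by auto.
  pose proof (delta_pos P HP). pose proof PI_RGT_0. pose proof PI_le_16_5.
  assert (HN : (2 <= 2 ^ n)%nat) by (apply (Nat.pow_le_mono_r 2 1 n); lia).
  assert (Hg : ex_RInt (phi_sq_sinc (2 ^ n) P z) (- delta P) (delta P))
    by apply ex_RInt_continuity, phi_sq_sinc_continuous.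
  split.
  - eapply Rle_trans;
      [|apply RInt_ge_quadratic with (c0 := P / PI) (c2 := - (5 / 12 * P ^ 3 / PI)); [lra|auto|]].
    + unfold delta. replace (2 * (P / PI) * (PI / (2 * P)) + 2 * - (5 / 12 * P ^ 3 / PI)
        * (PI / (2 * P)) ^ 3 / 3) with (1 - 5 * PI ^ 2 / 144) by (field; lra). nra.
    + intros x Hx. eapply Rle_trans;
        [|apply phi_sq_sinc_constant_ge; auto; [lra|apply Rabs_mult_delta_le; auto]].
      right. field. lra.
  - eapply Rle_trans; [apply RInt_le_quadratic with (c0 := P / PI) (c2 := 0); [lra|auto|]|].
    + intros x _. rewrite Rmult_0_l, Rplus_0_r. apply phi_sq_sinc_le; lia || lra.
    + unfold delta. right. field. lra.
Qed.

Lemma detect_prob_balanced_bounds n P z : 0 < P -> is_balanced n z ->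
  0 <= detect_prob n P z <= 43 / 100.
Proof.
  intros HP Hz. rewrite detect_prob_eq_sinc by auto.
  pose proof (delta_pos P HP). pose proof PI_RGT_0. pose proof PI_le_16_5.
  assert (Hg : ex_RInt (phi_sq_sinc (2 ^ n) P z) (- delta P) (delta P))
    by apply ex_RInt_continuity, phi_sq_sinc_continuous.
  split.
  - eapply Rle_trans; [|apply RInt_ge_quadratic with (c0 := 0) (c2 := 0); [lra|auto|]].
    + lra.
    + intros x _. rewrite Rmult_0_l, Rplus_0_r. apply phi_sq_sinc_nonneg. lra.
  - eapply Rle_trans;
      [apply RInt_le_quadratic with (c0 := 0) (c2 := P ^ 3 / (2 * PI)); [lra|auto|]|].
    + intros x Hx. rewrite Rplus_0_l. apply phi_sq_sinc_balanced_le; [|lra| |].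
      * pose proof (Nat.pow_nonzero 2 n). lia.
      * apply rsum_sgn_balanced; auto.
      * apply Rabs_mult_delta_le; auto.
    + unfold delta. replace (2 * 0 * (PI / (2 * P)) + 2 * (P ^ 3 / (2 * PI))
        * (PI / (2 * P)) ^ 3 / 3) with (PI ^ 2 / 24) by (field; lra). nra.
Qed.

Definition ntrue (w : list bool) : nat := count_occ Bool.bool_dec w true.

Definition outcome_sum (f : list bool -> R) (k : nat) : R :=
  fold_right (fun w acc => f w + acc) 0 (all_outcomes k).

Lemma outcome_sum_S f k :
  outcome_sum f (S k) = outcome_sum (fun w => f (true :: w) + f (false :: w)) k.
Proof.
  unfold outcome_sum. simpl. induction (all_outcomes k) as [|w L IH]; simpl; [reflexivity|].
  rewrite IH. ring.
Qed.

Lemma outcome_sum_ext f g k : (forall w, f w = g w) -> outcome_sum f k = outcome_sum g k.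
Proof.
  intros H. unfold outcome_sum. induction (all_outcomes k); simpl; [reflexivity|].
  rewrite H, IHl. reflexivity.
Qed.

Lemma outcome_sum_le f g k : (forall w, f w <= g w) -> outcome_sum f k <= outcome_sum g k.
Proof.
  intros H. unfold outcome_sum. induction (all_outcomes k) as [|w L IH]; simpl; [lra|].
  specialize (H w). lra.
Qed.

Lemma outcome_sum_mult_l c f k : outcome_sum (fun w => c * f w) k = c * outcome_sum f k.
Proof.
  unfold outcome_sum. induction (all_outcomes k) as [|w L IH]; simpl; [ring|].
  rewrite IH. ring.
Qed.

Lemma seq_prob_nonneg p w : 0 <= p <= 1 -> 0 <= seq_prob p w.
Proof.
  intros Hp. induction w as [|b w IH]; simpl; [lra|].
  destruct b; apply Rmult_le_pos; lra.
Qed.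

Lemma outcome_sum_pgf p x k :
  outcome_sum (fun w => seq_prob p w * x ^ ntrue w) k = (p * x + (1 - p)) ^ k.
Proof.
  induction k as [|k IH]; [unfold outcome_sum; simpl; ring|].
  rewrite outcome_sum_S.
  rewrite (outcome_sum_ext _ (fun w => (p * x + (1 - p)) * (seq_prob p w * x ^ ntrue w))).
  - rewrite outcome_sum_mult_l, IH. reflexivity.
  - intros w. unfold ntrue. rewrite count_occ_cons_eq, count_occ_cons_neq by congruence.
    simpl. ring.
Qed.

(* Chernoff's bound: Markov's inequality applied to [x ^ ntrue w]. *)
Lemma error_prob_le_pgf p k D truth x c : 0 <= p <= 1 -> 0 <= x -> 0 <= c ->
  (forall w, D w <> truth -> 1 <= c * x ^ ntrue w) ->
  error_prob p k D truth <= c * (p * x + (1 - p)) ^ k.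
Proof.
  intros Hp Hx Hc Herr.
  change (outcome_sum (fun w => seq_prob p w * (if Bool.eqb (D w) truth then 0 else 1)) k
          <= c * (p * x + (1 - p)) ^ k).
  rewrite <- outcome_sum_pgf, <- outcome_sum_mult_l. apply outcome_sum_le. intros w.
  pose proof (seq_prob_nonneg p w Hp). pose proof (pow_le x (ntrue w) Hx).
  destruct (Bool.eqb (D w) truth) eqn:E.
  - rewrite Rmult_0_r. apply Rmult_le_pos; [|apply Rmult_le_pos]; lra.
  - apply Bool.eqb_false_iff, Herr in E. nra.
Qed.

Lemma pow_mult_pow_inv_ge_1 r i j : 1 <= r -> (i <= j)%nat -> 1 <= r ^ j * (/ r) ^ i.
Proof.
  intros Hr Hij. replace j with (i + (j - i))%nat by lia.
  rewrite pow_add, <- (Rmult_comm (r ^ (j - i))), Rmult_assoc, <- Rpow_mult_distr, Rinv_r,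
    pow1, Rmult_1_r by lra.
  apply pow_R1_Rle; lra.
Qed.

Lemma pow_le_exp_neg y m : 0 <= y <= / 3 -> y ^ m <= exp (- INR m).
Proof.
  intros Hy. induction m as [|m IH]; [simpl; rewrite Ropp_0, exp_0; lra|].
  rewrite S_INR, Ropp_plus_distr, exp_plus, (exp_Ropp 1). simpl.
  assert (/ 3 <= / exp 1) by (apply Rinv_le_contravar; [apply exp_pos|apply exp_le_3]).
  pose proof (pow_le y m (proj1 Hy)). rewrite Rmult_comm.
  apply Rmult_le_compat; lra.
Qed.

Definition threshold_rule (T : nat) (w : list bool) : bool := (T <=? ntrue w)%nat.

(* With 52 m runs and threshold 28 m, both error probabilities are at most (1/3)^m; the ratio
   28/52 lies strictly between the bounds 43/100 and 16/25 on the detection probability. *)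
Lemma threshold_error_constant p m : 16 / 25 <= p <= 1 ->
  error_prob p (52 * m) (threshold_rule (28 * m)) true <= exp (- INR m).
Proof.
  intros Hp.
  eapply Rle_trans; [apply error_prob_le_pgf with (x := / (3 / 2)) (c := (3 / 2) ^ (28 * m))|].
  - lra.
  - lra.
  - apply pow_le; lra.
  - intros w Hw. apply pow_mult_pow_inv_ge_1; [lra|].
    unfold threshold_rule in Hw. apply Bool.not_true_iff_false, Nat.leb_gt in Hw. lia.
  - rewrite !pow_mult, <- Rpow_mult_distr. apply pow_le_exp_neg.
    set (b := p * / (3 / 2) + (1 - p)).
    assert (Hb : 0 <= b <= 59 / 75) by (unfold b; lra).
    assert (b ^ 52 <= (59 / 75) ^ 52) by (apply pow_incr; lra).
    assert (H0 : 0 <= (3 / 2) ^ 28) by (apply pow_le; lra).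
    assert ((3 / 2) ^ 28 * (59 / 75) ^ 52 <= / 3) by lra.
    split; [apply Rmult_le_pos; [|apply pow_le]; lra|].
    eapply Rle_trans; [apply Rmult_le_compat_l|]; eassumption.
Qed.

Lemma threshold_error_balanced p m : 0 <= p <= 43 / 100 ->
  error_prob p (52 * m) (threshold_rule (28 * m)) false <= exp (- INR m).
Proof.
  intros Hp.
  eapply Rle_trans; [apply error_prob_le_pgf with (x := 3 / 2) (c := (/ (3 / 2)) ^ (28 * m))|].
  - lra.
  - lra.
  - apply pow_le; lra.
  - intros w Hw. rewrite Rmult_comm. apply pow_mult_pow_inv_ge_1; [lra|].
    unfold threshold_rule in Hw. apply Bool.not_false_iff_true, Nat.leb_le in Hw. lia.
  - rewrite !pow_mult, <- Rpow_mult_distr. apply pow_le_exp_neg.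
    replace (/ (3 / 2)) with (2 / 3) by field.
    set (b := p * (3 / 2) + (1 - p)).
    assert (Hb : 0 <= b <= 243 / 200) by (unfold b; lra).
    assert (b ^ 52 <= (243 / 200) ^ 52) by (apply pow_incr; lra).
    assert (H0 : 0 <= (2 / 3) ^ 28) by (apply pow_le; lra).
    assert ((2 / 3) ^ 28 * (243 / 200) ^ 52 <= / 3) by lra.
    split; [apply Rmult_le_pos; [|apply pow_le]; lra|].
    eapply Rle_trans; [apply Rmult_le_compat_l|]; eassumption.
Qed.

Theorem theorem2 :
  exists C K : R, 0 < C /\ 0 < K /\
    forall (m n : nat) (P : R), (1 <= m)%nat -> 0 < P ->
      exists (k : nat) (D : list bool -> bool),
        INR k <= K * INR m /\
        forall z : nat -> bool,
          (is_constant n z ->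
             error_prob (detect_prob n P z) k D true <= C * exp (- INR m)) /\
          (is_balanced n z ->
             error_prob (detect_prob n P z) k D false <= C * exp (- INR m)).
Proof.
  exists 1, 52. split; [lra|]. split; [lra|].
  intros m n P Hm HP. destruct n as [|n'].
  - (* a single input cannot be balanced, and zero runs with the answer "constant" never err *)
    exists 0%nat, (fun _ => true). split; [simpl; pose proof (pos_INR m); lra|].
    intros z. split.
    + intros _. unfold error_prob. simpl. pose proof (exp_pos (- INR m)). lra.
    + intros Hb. unfold is_balanced in Hb. simpl in Hb. destruct (z 0%nat); simpl in Hb; lia.
  - exists (52 * m)%nat, (threshold_rule (28 * m)). split; [rewrite mult_INR; simpl; lra|].
    intros z. rewrite Rmult_1_l. split; intros Hz.
    + apply threshold_error_constant, detect_prob_constant_bounds; auto. lia.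
    + apply threshold_error_balanced, detect_prob_balanced_bounds; auto.
Qed.
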